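(* Let $B$ be a finite Blaschke product of degree $2$. If $M(B)\le 3$ then $m(B)\ge1$, and if $M(B)<3$ then $m(B)>1$. Equivalently: if the restriction of $z\mapsto z^3/B(z)$ to $\mathbb T$ is a homeomorphism of $\mathbb T$, then so is the restriction of $z\mapsto B(z)/z$; and if $z^3/B(z)$ is a diffeomorphism of $\mathbb T$, then so is $B(z)/z$.
   Context: A finite Blaschke product of degree $n$ is $B(z)=\alpha\prod_{k=1}^n \frac{z-a_k}{1-\overline{a_k}z}$ with $a_k\in\mathbb D=\{|z|<1\}$, $\alpha\in\mathbb T=\{|z|=1\}$; $M(B)=\sup_{|z|=1}|B'(z)|$, $m(B)=\inf_{|z|=1}|B'(z)|$. For a Blaschke product of degree $n$ it is known that $B(z)/z^{n-1}$ is a homeomorphism (resp. diffeomorphism) of $\mathbb T$ iff $m(B)\ge n-1$ (resp. $>n-1$), and $z^{n+1}/B(z)$ is a homeomorphism (resp. diffeomorphism) of $\mathbb T$ iff $M(B)\le n+1$ (resp. $<n+1$). *)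

From Stdlib Require Import Reals.
From Coquelicot Require Import Coquelicot.
Open Scope C_scope.

Definition blaschke_factor (a z : C) : C := (z - a) / (1 - Cconj a * z).

Definition blaschke2 (alpha a1 a2 : C) (z : C) : C :=
  alpha * blaschke_factor a1 z * blaschke_factor a2 z.

Definition Cderiv_is (f : C -> C) (z l : C) : Prop :=
  @is_derive C_AbsRing C_NormedModule f z l.

Definition deriv_mods_on_circle (f : C -> C) : R -> Prop :=
  fun r => exists z l, Cmod z = 1%R /\ Cderiv_is f z l /\ r = Cmod l.

Definition Msup (f : C -> C) : Rbar := Lub_Rbar (deriv_mods_on_circle f).
Definition minf (f : C -> C) : Rbar := Glb_Rbar (deriv_mods_on_circle f).

(* On the unit circle |B'(z)| = P_a1(z) + P_a2(z), the sum of the Poisson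
   kernels at the two zeros (deriv_mods_blaschke2).  The map z B(z) is a
   Blaschke product of degree 3: its level set through a point z0 of the circle
   is the root set of a cubic, which splits into three points z0, z1, z2 of the
   circle, and a partial-fraction identity gives
   sum_i 1 / (1 + |B'(z_i)|) = 1  (level_set_reciprocal_sum).
   Hence if |B'| <= c on the circle then (c - 1) |B'(z0)| >= 2
   (poisson2_lower_bound): c = 3 gives m(B) >= 1, and a bound c < 3 on M(B)
   gives m(B) >= 2 / (c - 1) > 1. *)

From Stdlib Require Import Reals Lra Psatz.
From Coquelicot Require Import Coquelicot.
Open Scope C_scope.

(* The defect identity |1 - conj(a) z|^2 - |z - a|^2 = (1 - |z|^2)(1 - |a|^2):
   it is behind both |b_a| = 1 on the circle and the location of level sets. *)
Lemma blaschke_defect (z a : C) :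
  (Cmod (1 - Cconj a * z) ^ 2 - Cmod (z - a) ^ 2 = (1 - Cmod z ^ 2) * (1 - Cmod a ^ 2))%R.
Proof.
  destruct z as [x y], a as [u v].
  rewrite !Cmod2_alt; unfold Cconj, Cminus, Cplus, Copp, Cmult, Re, Im; simpl; ring.
Qed.

Lemma circle_neq0 (z : C) : Cmod z = 1%R -> z <> 0.
Proof. intros Hz H; rewrite H, Cmod_0 in Hz; lra. Qed.

Lemma circle_sub_disk_neq0 (z a : C) : Cmod z = 1%R -> (Cmod a < 1)%R -> z - a <> 0.
Proof. intros Hz Ha H; apply Ceq_minus in H; subst; lra. Qed.

Lemma circle_sub_disk_mod_pos (z a : C) : Cmod z = 1%R -> (Cmod a < 1)%R -> (0 < Cmod (z - a))%R.
Proof. intros Hz Ha; apply Cmod_gt_0, circle_sub_disk_neq0; auto. Qed.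

Lemma factor_den_circle (z a : C) : (Cmod a < 1)%R -> Cmod z = 1%R -> 1 - Cconj a * z <> 0.
Proof.
  intros Ha Hz H; apply Ceq_minus in H; symmetry in H.
  apply (f_equal Cmod) in H; rewrite Cmod_mult, Cmod_conj, Cmod_1, Hz in H; lra.
Qed.

Lemma factor_den_mod_circle (z a : C) : Cmod z = 1%R -> Cmod (1 - Cconj a * z) = Cmod (z - a).
Proof.
  intros Hz; generalize (blaschke_defect z a) (Cmod_ge_0 (1 - Cconj a * z)) (Cmod_ge_0 (z - a)).
  rewrite Hz; nra.
Qed.

Definition poisson (a z : C) : R := ((1 - Cmod a ^ 2) / Cmod (z - a) ^ 2)%R.

Lemma poisson_pos (a z : C) : Cmod z = 1%R -> (Cmod a < 1)%R -> (0 < poisson a z)%R.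
Proof.
  intros Hz Ha; unfold poisson; apply Rdiv_lt_0_compat.
  - generalize (Cmod_ge_0 a); nra.
  - apply pow_lt, circle_sub_disk_mod_pos; auto.
Qed.

(* z b_a'(z) / b_a(z), the logarithmic derivative of b_a times z. *)
Definition factor_log_deriv (a z : C) : C :=
  z * (1 - Cconj a * a) / ((z - a) * (1 - Cconj a * z)).

Lemma factor_log_deriv_circle (a z : C) : Cmod z = 1%R -> (Cmod a < 1)%R ->
  factor_log_deriv a z = RtoC (poisson a z).
Proof.
  intros Hz Ha.
  pose proof (circle_sub_disk_neq0 z a Hz Ha) as Hza.
  assert (Hconj : Cconj z - Cconj a <> 0).
  { rewrite <- Cminus_conj; intro H; apply Hza.
    apply Cmod_eq_0; rewrite <- Cmod_conj, H; apply Cmod_0. }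
  assert (Hzz : z * Cconj z = 1).
  { rewrite <- Cmod2_conj, Hz; simpl; f_equal; ring. }
  assert (Hden : 1 - Cconj a * z = z * (Cconj z - Cconj a)) by (rewrite <- Hzz at 1; ring).
  unfold poisson, factor_log_deriv.
  rewrite RtoC_div by (apply pow_nonzero; intro H; apply Hza, Cmod_eq_0, H).
  rewrite RtoC_minus, !Cmod2_conj, Hden, Cminus_conj.
  simpl; field; auto using circle_neq0.
Qed.

Lemma factor_mod_compare (z a : C) : (Cmod a < 1)%R ->
  ((Cmod z < 1)%R -> (Cmod (z - a) < Cmod (1 - Cconj a * z))%R) /\
  ((1 < Cmod z)%R -> (Cmod (1 - Cconj a * z) < Cmod (z - a))%R).
Proof.
  intros Ha; pose proof (blaschke_defect z a) as E.
  pose proof (Cmod_ge_0 a); pose proof (Cmod_ge_0 z).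
  pose proof (Cmod_ge_0 (z - a)); pose proof (Cmod_ge_0 (1 - Cconj a * z)).
  split; intros Hz.
  - assert (0 < (1 - Cmod z ^ 2) * (1 - Cmod a ^ 2))%R by (apply Rmult_lt_0_compat; nra).
    nra.
  - assert (0 < (Cmod z ^ 2 - 1) * (1 - Cmod a ^ 2))%R by (apply Rmult_lt_0_compat; nra).
    nra.
Qed.

(* Cderiv_is uses the normed-module structure C_NormedModule; Coquelicot's
   product and chain rules are stated for C as a normed module over itself.
   Both structures have the same fields, so the two notions coincide. *)
Lemma Cderiv_is_iff (f : C -> C) (z l : C) :
  Cderiv_is f z l <-> @is_derive C_AbsRing (AbsRing_NormedModule C_AbsRing) f z l.
Proof.
  unfold Cderiv_is, is_derive, filterdiff.
  split; intros [[H1 H2 H3] Hd]; split; try constructor; assumption.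
Qed.

(* The derivative of 1/z is -1/z^2, by the identity
   1/y - 1/z + (y - z)/z^2 = (y - z)^2 / (z^2 y). *)
Lemma Cderiv_Cinv (z : C) : z <> 0 -> Cderiv_is Cinv z (- / (z * z)).
Proof.
  intros Hz; apply Cderiv_is_iff; split; [apply is_linear_scal_l |].
  intros x Hx.
  apply (@is_filter_lim_locally_unique C_AbsRing (AbsRing_NormedModule C_AbsRing)) in Hx.
  subst x; intros eps.
  assert (Hm : (0 < Cmod z)%R) by (apply Cmod_gt_0; auto).
  set (m := Cmod z) in *.
  assert (Hd : (0 < Rmin (m / 2) (eps * m ^ 3 / 2))%R).
  { apply Rmin_glb_lt; [lra |].
    pose proof (cond_pos eps); pose proof (pow_lt m 3 Hm); nra. }
  exists (mkposreal _ Hd); intros y Hy.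
  change (Cmod (y - z) < Rmin (m / 2) (eps * m ^ 3 / 2))%R in Hy.
  pose proof (Rmin_l (m / 2) (eps * m ^ 3 / 2)) as Hd1.
  pose proof (Rmin_r (m / 2) (eps * m ^ 3 / 2)) as Hd2.
  assert (Hy0 : (m / 2 < Cmod y)%R).
  { pose proof (Cmod_triangle y (z - y)) as Htri.
    replace (y + (z - y)) with z in Htri by ring.
    assert (Cmod (z - y) = Cmod (y - z)) by (rewrite <- Cmod_opp; f_equal; ring).
    fold m in Htri; lra. }
  assert (Hyn : (y : C) <> 0) by (intro H; rewrite H, Cmod_0 in Hy0; lra).
  change (Cmod (/ y - / z - (y - z) * (- / (z * z))) <= eps * Cmod (y - z))%R.
  replace (/ y - / z - (y - z) * (- / (z * z))) with ((y - z) * (y - z) / (z * z * y))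
    by (field; auto).
  rewrite Cmod_div by (repeat apply Cmult_neq_0; auto).
  rewrite !Cmod_mult; fold m.
  pose proof (Cmod_ge_0 (y - z)); pose proof (cond_pos eps).
  set (e := Cmod (y - z)) in *; set (w := Cmod y) in *.
  apply Rle_div_l; [apply Rmult_lt_0_compat; [apply Rmult_lt_0_compat |]; lra |].
  assert (e * e <= e * (eps * m ^ 3 / 2))%R by (apply Rmult_le_compat_l; lra).
  assert (eps * m ^ 3 / 2 <= eps * (m * m * w))%R.
  { replace (eps * m ^ 3 / 2)%R with (eps * (m * m * (m / 2)))%R by (simpl; field).
    apply Rmult_le_compat_l; [lra |].
    apply Rmult_le_compat_l; [nra | lra]. }
  nra.
Qed.

Lemma Cderiv_ext (f g : C -> C) (z l l' : C) :
  (forall y, f y = g y) -> l = l' -> Cderiv_is f z l -> Cderiv_is g z l'.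
Proof. intros H Hl Hd; subst; exact (is_derive_ext f g z l' H Hd). Qed.

Lemma Cderiv_const (c z : C) : Cderiv_is (fun _ => c) z 0.
Proof. apply (@is_derive_const C_AbsRing C_NormedModule). Qed.

Lemma Cderiv_id (z : C) : Cderiv_is (fun y => y) z 1.
Proof. apply Cderiv_is_iff, (@is_derive_id C_AbsRing). Qed.

Lemma Cderiv_plus (f g : C -> C) (z df dg : C) :
  Cderiv_is f z df -> Cderiv_is g z dg -> Cderiv_is (fun y => f y + g y) z (df + dg).
Proof. apply (@is_derive_plus C_AbsRing C_NormedModule). Qed.

Lemma Cderiv_mult (f g : C -> C) (z df dg : C) :
  Cderiv_is f z df -> Cderiv_is g z dg ->
  Cderiv_is (fun y => f y * g y) z (df * g z + f z * dg).
Proof.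
  rewrite !Cderiv_is_iff; intros Hf Hg.
  apply (@is_derive_mult C_AbsRing f g z df dg Hf Hg); intros; apply Cmult_comm.
Qed.

Lemma Cderiv_inv (g : C -> C) (z dg : C) :
  Cderiv_is g z dg -> g z <> 0 -> Cderiv_is (fun y => / g y) z (- dg / (g z * g z)).
Proof.
  intros Hg Hgz.
  apply Cderiv_is_iff in Hg.
  pose proof (@is_derive_comp C_AbsRing C_NormedModule Cinv g z _ dg
                (Cderiv_Cinv (g z) Hgz) Hg) as Hc.
  eapply Cderiv_ext; [intro; reflexivity | | exact Hc].
  change (dg * - / (g z * g z) = - dg / (g z * g z)); field; auto.
Qed.

Lemma Cderiv_blaschke_factor (a z : C) : 1 - Cconj a * z <> 0 ->
  Cderiv_is (blaschke_factor a) z ((1 - Cconj a * a) / (1 - Cconj a * z) ^ 2).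
Proof.
  intros Hden.
  assert (Hnum : Cderiv_is (fun y => y + - a) z (1 + 0))
    by (apply Cderiv_plus; [apply Cderiv_id | apply Cderiv_const]).
  assert (Hlin : Cderiv_is (fun y => 1 + - Cconj a * y) z (0 + (0 * z + - Cconj a * 1))).
  { apply Cderiv_plus; [apply Cderiv_const |].
    apply (Cderiv_mult (fun _ => - Cconj a)); [apply Cderiv_const | apply Cderiv_id]. }
  assert (Hlin0 : 1 + - Cconj a * z <> 0) by (intro H; apply Hden; rewrite <- H; ring).
  pose proof (Cderiv_mult _ _ _ _ _ Hnum (Cderiv_inv _ _ _ Hlin Hlin0)) as H.
  eapply Cderiv_ext; [| | exact H].
  - intro y; unfold blaschke_factor, Cdiv, Cminus; f_equal; f_equal; ring.
  - simpl; field; auto.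
Qed.

(* Every complex number has a square root: with r = |w|, take
   sqrt((r + Re w)/2) + i sgn(Im w) sqrt((r - Re w)/2). *)
Lemma Csqrt_exists (w : C) : exists s : C, s * s = w.
Proof.
  destruct w as [x y].
  set (r := sqrt (x * x + y * y)).
  assert (Hr2 : (r * r = x * x + y * y)%R) by (apply sqrt_sqrt; nra).
  pose proof (sqrt_pos (x * x + y * y)) as Hr0; fold r in Hr0.
  assert (Hx : (- r <= x <= r)%R) by nra.
  pose proof (sqrt_sqrt ((r + x) / 2)) as Hu; pose proof (sqrt_sqrt ((r - x) / 2)) as Hv.
  assert (Huv : (sqrt ((r + x) / 2) * sqrt ((r - x) / 2) = Rabs y / 2)%R).
  { rewrite <- sqrt_mult by lra.
    pose proof (Rsqr_abs y) as Ey; pose proof (Rabs_pos y); unfold Rsqr in Ey.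
    replace ((r + x) / 2 * ((r - x) / 2))%R with (Rsqr (Rabs y / 2)) by (unfold Rsqr; nra).
    apply sqrt_Rsqr; lra. }
  destruct (Rle_or_lt 0 y) as [Hy | Hy].
  - exists (sqrt ((r + x) / 2), sqrt ((r - x) / 2)).
    rewrite Rabs_right in Huv by lra.
    unfold Cmult; simpl; f_equal; nra.
  - exists (sqrt ((r + x) / 2), - sqrt ((r - x) / 2))%R.
    rewrite Rabs_left in Huv by lra.
    unfold Cmult; simpl; f_equal; nra.
Qed.

(* Vieta: a monic cubic with a known root z0 splits completely over C,
   the other two roots being those of the quotient quadratic. *)
Lemma cubic_vieta (c2 c1 c0 z0 : C) : z0 ^ 3 + c2 * z0 ^ 2 + c1 * z0 + c0 = 0 ->
  exists z1 z2 : C,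
    c2 = - (z0 + z1 + z2) /\ c1 = z0 * z1 + z0 * z2 + z1 * z2 /\ c0 = - (z0 * z1 * z2).
Proof.
  intros Hroot.
  set (p := c2 + z0); set (q := c1 + p * z0).
  destruct (Csqrt_exists (p * p - 4 * q)) as [s Hs].
  assert (H2 : (2 : C) <> 0) by (intro H; apply (f_equal Re) in H; simpl in H; lra).
  exists ((- p + s) / 2), ((- p - s) / 2).
  assert (Hsum : (- p + s) / 2 + (- p - s) / 2 = - p) by (field; auto).
  assert (Hprod : (- p + s) / 2 * ((- p - s) / 2) = q).
  { replace ((- p + s) / 2 * ((- p - s) / 2)) with ((p * p - s * s) / 4) by (field; auto).
    rewrite Hs; field; auto. }
  set (z1 := (- p + s) / 2) in *; set (z2 := (- p - s) / 2) in *.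
  split; [| split].
  - replace (z0 + z1 + z2) with (z0 + (z1 + z2)) by ring; rewrite Hsum; unfold p; ring.
  - replace (z0 * z1 + z0 * z2 + z1 * z2) with (z0 * (z1 + z2) + z1 * z2) by ring.
    rewrite Hsum, Hprod; unfold q; ring.
  - replace (z0 * z1 * z2) with (z0 * (z1 * z2)) by ring; rewrite Hprod.
    apply Ceq_minus; rewrite <- Hroot; unfold q, p; ring.
Qed.

Lemma Cminus_swap_neq0 (x y : C) : x - y <> 0 -> y - x <> 0.
Proof. intros H H'; apply H; replace (x - y) with (- (y - x)) by ring; rewrite H'; ring. Qed.

(* Partial fractions: for D of degree <= 2 with D(0) = 1, the residues of
   D(z) / (z (z - z0) (z - z1) (z - z2)) sum to zero. *)
Lemma partial_fractions (D : C -> C) (d1 d2 z0 z1 z2 : C) :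
  (forall z, D z = 1 + d1 * z + d2 * z ^ 2) ->
  z0 <> 0 -> z1 <> 0 -> z2 <> 0 -> z0 - z1 <> 0 -> z0 - z2 <> 0 -> z1 - z2 <> 0 ->
  D z0 / (z0 * ((z0 - z1) * (z0 - z2))) + D z1 / (z1 * ((z1 - z0) * (z1 - z2)))
  + D z2 / (z2 * ((z2 - z0) * (z2 - z1))) = / (z0 * z1 * z2).
Proof.
  intros HD; rewrite !HD; intros.
  field; repeat split; auto using Cminus_swap_neq0.
Qed.

(* If z_i (z_i - z_j)(z_i - z_k) = z0 z1 z2 D(z_i) w_i for {i, j, k} = {0, 1, 2},
   then 1/w0 + 1/w1 + 1/w2 = 1: solving for 1/w_i turns the sum into
   z0 z1 z2 times the partial-fraction sum above. *)
Lemma inverse_weights_sum (D : C -> C) (d1 d2 z0 z1 z2 w0 w1 w2 : C) :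
  (forall z, D z = 1 + d1 * z + d2 * z ^ 2) ->
  z0 * z1 * z2 <> 0 -> D z0 <> 0 -> D z1 <> 0 -> D z2 <> 0 ->
  w0 <> 0 -> w1 <> 0 -> w2 <> 0 ->
  z0 * ((z0 - z1) * (z0 - z2)) = z0 * z1 * z2 * D z0 * w0 ->
  z1 * ((z1 - z0) * (z1 - z2)) = z0 * z1 * z2 * D z1 * w1 ->
  z2 * ((z2 - z0) * (z2 - z1)) = z0 * z1 * z2 * D z2 * w2 ->
  / w0 + / w1 + / w2 = 1.
Proof.
  intros HD Hl D0 D1 D2 W0 W1 W2 E0 E1 E2.
  assert (N0 : z0 * ((z0 - z1) * (z0 - z2)) <> 0)
    by (rewrite E0; apply Cmult_neq_0; [apply Cmult_neq_0 |]; auto).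
  assert (N1 : z1 * ((z1 - z0) * (z1 - z2)) <> 0)
    by (rewrite E1; apply Cmult_neq_0; [apply Cmult_neq_0 |]; auto).
  assert (N2 : z2 * ((z2 - z0) * (z2 - z1)) <> 0)
    by (rewrite E2; apply Cmult_neq_0; [apply Cmult_neq_0 |]; auto).
  assert (Hw : forall zi r wi : C, r <> 0 -> r = z0 * z1 * z2 * D zi * wi ->
                 / wi = z0 * z1 * z2 * (D zi / r)).
  { intros zi r wi Hr ->; field.
    repeat split; intro H; apply Hr; rewrite H; ring. }
  rewrite (Hw _ _ _ N0 E0), (Hw _ _ _ N1 E1), (Hw _ _ _ N2 E2).
  assert (Z : z0 <> 0 /\ z1 <> 0 /\ z2 <> 0)
    by (repeat split; intro H; apply Hl; rewrite H; ring).
  assert (Dist : z0 - z1 <> 0 /\ z0 - z2 <> 0 /\ z1 - z2 <> 0)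
    by (repeat split; intro H; first [apply N0; rewrite H; ring | apply N1; rewrite H; ring]).
  destruct Z as (? & ? & ?), Dist as (? & ? & ?).
  rewrite <- !Cmult_plus_distr_l, (partial_fractions D d1 d2); auto.
  field; auto.
Qed.

(* If positive f0, f1 >= f2 satisfy sum 1/(1 + f_i) = 1 then
   f0/(1 + f0) = 1/(1 + f1) + 1/(1 + f2) >= 2/(1 + f1), i.e. (f1 - 1) f0 >= 2. *)
Lemma reciprocal_sum_bound (f0 f1 f2 : R) : (0 < f0)%R -> (0 < f2)%R -> (f2 <= f1)%R ->
  (/ (1 + f0) + / (1 + f1) + / (1 + f2) = 1)%R -> (2 <= (f1 - 1) * f0)%R.
Proof.
  intros H0 H2 H21 Hsum.
  assert (/ (1 + f1) <= / (1 + f2))%R by (apply Rinv_le_contravar; lra).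
  assert (Hk : (2 / (1 + f1) <= f0 / (1 + f0))%R).
  { replace (f0 / (1 + f0))%R with (1 - / (1 + f0))%R by (field; lra).
    unfold Rdiv; lra. }
  apply (Rmult_le_compat_r ((1 + f1) * (1 + f0))) in Hk; [| apply Rmult_le_pos; lra].
  replace (2 / (1 + f1) * ((1 + f1) * (1 + f0)))%R with (2 * (1 + f0))%R in Hk by (field; lra).
  replace (f0 / (1 + f0) * ((1 + f1) * (1 + f0)))%R with (f0 * (1 + f1))%R in Hk by (field; lra).
  lra.
Qed.

Section Degree2.

Variables (alpha a1 a2 : C).
Hypotheses (Halpha : Cmod alpha = 1%R) (Ha1 : (Cmod a1 < 1)%R) (Ha2 : (Cmod a2 < 1)%R).

Lemma Cderiv_blaschke2 (z : C) : Cmod z = 1%R ->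
  Cderiv_is (blaschke2 alpha a1 a2) z
    (blaschke2 alpha a1 a2 z * (factor_log_deriv a1 z + factor_log_deriv a2 z) / z).
Proof.
  intros Hz.
  pose proof (factor_den_circle z a1 Ha1 Hz) as D1.
  pose proof (factor_den_circle z a2 Ha2 Hz) as D2.
  pose proof (Cderiv_mult _ _ _ _ _
                (Cderiv_mult _ _ _ _ _ (Cderiv_const alpha z) (Cderiv_blaschke_factor a1 z D1))
                (Cderiv_blaschke_factor a2 z D2)) as H.
  eapply Cderiv_ext; [intro; reflexivity | | exact H].
  unfold blaschke2, blaschke_factor, factor_log_deriv; field.
  repeat split; auto using circle_neq0, circle_sub_disk_neq0.
Qed.

Lemma blaschke2_mod_circle (z : C) : Cmod z = 1%R -> Cmod (blaschke2 alpha a1 a2 z) = 1%R.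
Proof.
  intros Hz; unfold blaschke2, blaschke_factor.
  rewrite !Cmod_mult, !Cmod_div by auto using factor_den_circle.
  rewrite Halpha, !factor_den_mod_circle by auto.
  pose proof (circle_sub_disk_mod_pos z a1 Hz Ha1);
    pose proof (circle_sub_disk_mod_pos z a2 Hz Ha2).
  field; lra.
Qed.

Definition poisson2 (z : C) : R := (poisson a1 z + poisson a2 z)%R.

Lemma poisson2_pos (z : C) : Cmod z = 1%R -> (0 < poisson2 z)%R.
Proof.
  intros Hz; unfold poisson2.
  pose proof (poisson_pos a1 z Hz Ha1); pose proof (poisson_pos a2 z Hz Ha2); lra.
Qed.

Lemma deriv_mods_blaschke2 (r : R) :
  deriv_mods_on_circle (blaschke2 alpha a1 a2) r <-> exists z, Cmod z = 1%R /\ r = poisson2 z.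
Proof.
  assert (Hmod : forall z, Cmod z = 1%R ->
    Cmod (blaschke2 alpha a1 a2 z * (factor_log_deriv a1 z + factor_log_deriv a2 z) / z)
    = poisson2 z).
  { intros z Hz.
    rewrite !factor_log_deriv_circle, <- RtoC_plus by auto.
    rewrite Cmod_div by auto using circle_neq0.
    rewrite Cmod_mult, blaschke2_mod_circle, Hz, Cmod_R by auto.
    rewrite Rabs_right by (apply Rle_ge, Rlt_le, (poisson2_pos z Hz)).
    unfold poisson2; field. }
  split.
  - intros [z [l [Hz [Hd ->]]]]; exists z; split; auto.
    apply is_C_derive_unique in Hd.
    pose proof (is_C_derive_unique _ _ _ (Cderiv_blaschke2 z Hz)) as Hd'.
    rewrite <- Hd, Hd'; auto.
  - intros [z [Hz ->]]; do 2 eexists; split; [exact Hz |].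
    split; [apply Cderiv_blaschke2, Hz | symmetry; apply Hmod, Hz].
Qed.

(* z B(z) / alpha = level_num / level_den, and the derivatives of numerator
   and denominator. *)
Definition level_num (z : C) : C := z * (z - a1) * (z - a2).
Definition level_den (z : C) : C := (1 - Cconj a1 * z) * (1 - Cconj a2 * z).
Definition level_num_deriv (z : C) : C := (z - a1) * (z - a2) + z * (z - a2) + z * (z - a1).
Definition level_den_deriv (z : C) : C :=
  - Cconj a1 * (1 - Cconj a2 * z) - Cconj a2 * (1 - Cconj a1 * z).

(* |level_num| < |level_den| inside the disk and > outside, so the level sets
   of modulus one lie on the circle. *)
Lemma level_set_on_circle (lam z : C) : Cmod lam = 1%R ->
  level_num z = lam * level_den z -> Cmod z = 1%R.
Proof.
  intros Hlam HE; apply (f_equal Cmod) in HE.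
  unfold level_num, level_den in HE; rewrite !Cmod_mult, Hlam in HE.
  destruct (factor_mod_compare z a1 Ha1) as [In1 Out1].
  destruct (factor_mod_compare z a2 Ha2) as [In2 Out2].
  pose proof (Cmod_ge_0 (z - a1)); pose proof (Cmod_ge_0 (z - a2)).
  pose proof (Cmod_ge_0 (1 - Cconj a1 * z)); pose proof (Cmod_ge_0 (1 - Cconj a2 * z)).
  pose proof (Rmult_le_pos _ _ (Cmod_ge_0 (z - a1)) (Cmod_ge_0 (z - a2))).
  destruct (Rtotal_order (Cmod z) 1) as [Hlt | [Heq | Hgt]]; [exfalso | exact Heq | exfalso].
  - pose proof (Rmult_le_0_lt_compat _ _ _ _ (Cmod_ge_0 _) (Cmod_ge_0 _) (In1 Hlt) (In2 Hlt)).
    pose proof (Cmod_ge_0 z); nra.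
  - pose proof (Rmult_le_0_lt_compat _ _ _ _ (Cmod_ge_0 _) (Cmod_ge_0 _) (Out1 Hgt) (Out2 Hgt)).
    nra.
Qed.

(* At a point of a level set on the circle, the logarithmic derivative of
   level_num / level_den, times z, is 1 + z b1'/b1 + z b2'/b2 = 1 + |B'(z)|. *)
Lemma level_log_deriv (lam z : C) : Cmod z = 1%R -> level_num z = lam * level_den z ->
  z * (level_num_deriv z - lam * level_den_deriv z) = lam * level_den z * RtoC (1 + poisson2 z).
Proof.
  intros Hz HE.
  assert (Hden : level_den z <> 0)
    by (apply Cmult_neq_0; apply factor_den_circle; auto).
  assert (Hlam : lam = level_num z / level_den z) by (rewrite HE; field; auto).
  unfold poisson2; rewrite !RtoC_plus, <- !factor_log_deriv_circle by auto.
  rewrite Hlam; unfold level_num, level_den, level_num_deriv, level_den_deriv, factor_log_deriv.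
  field; repeat split;
    auto using circle_neq0, circle_sub_disk_neq0, factor_den_circle.
Qed.

(* The level set of z B(z) through a point z0 of the circle consists of three
   points of the circle, and the reciprocals 1 / (1 + |B'|) over it sum to 1
   (z B pushes arc length forward to three times arc length). *)
Lemma level_set_reciprocal_sum (z0 : C) : Cmod z0 = 1%R ->
  exists z1 z2 : C, Cmod z1 = 1%R /\ Cmod z2 = 1%R /\
    (/ (1 + poisson2 z0) + / (1 + poisson2 z1) + / (1 + poisson2 z2) = 1)%R.
Proof.
  intros Hz0.
  assert (Hden0 : level_den z0 <> 0) by (apply Cmult_neq_0; apply factor_den_circle; auto).
  set (lam := level_num z0 / level_den z0).
  assert (HE0 : level_num z0 = lam * level_den z0) by (unfold lam; field; auto).
  assert (Hlam : Cmod lam = 1%R).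
  { unfold lam, level_num, level_den; rewrite Cmod_div by auto.
    rewrite !Cmod_mult, Hz0, !factor_den_mod_circle by auto.
    pose proof (circle_sub_disk_mod_pos z0 a1 Hz0 Ha1);
      pose proof (circle_sub_disk_mod_pos z0 a2 Hz0 Ha2).
    field; lra. }
  pose (c2 := - (a1 + a2) - lam * Cconj a1 * Cconj a2).
  pose (c1 := a1 * a2 + lam * (Cconj a1 + Cconj a2)).
  assert (Hcubic : forall z,
    level_num z - lam * level_den z = z ^ 3 + c2 * z ^ 2 + c1 * z + - lam)
    by (intro z; unfold level_num, level_den, c2, c1; ring).
  assert (Hcubic' : forall z,
    level_num_deriv z - lam * level_den_deriv z = 3 * z ^ 2 + 2 * c2 * z + c1)
    by (intro z; unfold level_num_deriv, level_den_deriv, c2, c1; ring).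
  destruct (cubic_vieta c2 c1 (- lam) z0) as (z1 & z2 & V2 & V1 & V0).
  { rewrite <- Hcubic, HE0; ring. }
  rewrite V2, V1, V0 in Hcubic; rewrite V2, V1 in Hcubic'.
  assert (Hlevel : forall z, z = z0 \/ z = z1 \/ z = z2 ->
    Cmod z = 1%R /\ level_num z = lam * level_den z).
  { intros z Hz.
    assert (level_num z = lam * level_den z)
      by (apply Ceq_minus; rewrite Hcubic; destruct Hz as [-> | [-> | ->]]; ring).
    split; [apply (level_set_on_circle lam) |]; auto. }
  destruct (Hlevel z1) as [Hz1 HE1]; auto.
  destruct (Hlevel z2) as [Hz2 HE2]; auto.
  exists z1, z2; split; [exact Hz1 | split; [exact Hz2 |]].
  pose proof (level_log_deriv lam z0 Hz0 HE0) as L0.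
  pose proof (level_log_deriv lam z1 Hz1 HE1) as L1.
  pose proof (level_log_deriv lam z2 Hz2 HE2) as L2.
  rewrite Hcubic' in L0, L1, L2.
  assert (Hw : forall z, Cmod z = 1%R -> RtoC (1 + poisson2 z) <> 0 /\ level_den z <> 0).
  { intros z Hz; split.
    - intro H; apply (f_equal Re) in H; simpl in H; pose proof (poisson2_pos z Hz); lra.
    - apply Cmult_neq_0; apply factor_den_circle; auto. }
  destruct (Hw z0 Hz0), (Hw z1 Hz1), (Hw z2 Hz2).
  assert (Hlamz : lam = z0 * z1 * z2) by (replace lam with (- - lam) by ring; rewrite V0; ring).
  rewrite Hlamz in L0, L1, L2.
  assert (Hsum : / RtoC (1 + poisson2 z0) + / RtoC (1 + poisson2 z1)
                 + / RtoC (1 + poisson2 z2) = 1).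
  { apply (inverse_weights_sum level_den (- (Cconj a1 + Cconj a2)) (Cconj a1 * Cconj a2)
             z0 z1 z2); auto.
    - intro z; unfold level_den; ring.
    - rewrite <- Hlamz; apply circle_neq0, Hlam.
    - rewrite <- L0; ring.
    - rewrite <- L1; ring.
    - rewrite <- L2; ring. }
  rewrite <- !RtoC_inv, <- !RtoC_plus in Hsum by (pose proof (poisson2_pos z0 Hz0);
    pose proof (poisson2_pos z1 Hz1); pose proof (poisson2_pos z2 Hz2); lra).
  apply (f_equal Re) in Hsum; exact Hsum.
Qed.

Lemma poisson2_lower_bound (c : R) : (forall z, Cmod z = 1%R -> (poisson2 z <= c)%R) ->
  forall z0, Cmod z0 = 1%R -> (2 <= (c - 1) * poisson2 z0)%R.
Proof.
  intros Hc z0 Hz0.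
  destruct (level_set_reciprocal_sum z0 Hz0) as (z1 & z2 & Hz1 & Hz2 & Hsum).
  pose proof (poisson2_pos z0 Hz0); pose proof (poisson2_pos z1 Hz1);
    pose proof (poisson2_pos z2 Hz2).
  pose proof (Hc z1 Hz1); pose proof (Hc z2 Hz2).
  destruct (Rle_or_lt (poisson2 z2) (poisson2 z1)).
  - assert (2 <= (poisson2 z1 - 1) * poisson2 z0)%R
      by (apply (reciprocal_sum_bound _ _ (poisson2 z2)); auto).
    nra.
  - assert (2 <= (poisson2 z2 - 1) * poisson2 z0)%R
      by (apply (reciprocal_sum_bound _ _ (poisson2 z1)); lra).
    nra.
Qed.

Lemma Msup_blaschke2_le (c : R) : Rbar_le (Msup (blaschke2 alpha a1 a2)) c ->
  forall z, Cmod z = 1%R -> (poisson2 z <= c)%R.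
Proof.
  intros HM z Hz.
  destruct (Lub_Rbar_correct (deriv_mods_on_circle (blaschke2 alpha a1 a2))) as [Hub _].
  apply (Rbar_le_trans (poisson2 z) (Msup (blaschke2 alpha a1 a2)) c); [| exact HM].
  apply Hub, deriv_mods_blaschke2.
  exists z; auto.
Qed.

Lemma minf_blaschke2_ge (m : R) : (forall z, Cmod z = 1%R -> (m <= poisson2 z)%R) ->
  Rbar_le m (minf (blaschke2 alpha a1 a2)).
Proof.
  intros Hm.
  destruct (Glb_Rbar_correct (deriv_mods_on_circle (blaschke2 alpha a1 a2))) as [_ Hglb].
  apply Hglb; intros r Hr.
  apply deriv_mods_blaschke2 in Hr; destruct Hr as (z & Hz & ->); apply Hm, Hz.
Qed.

End Degree2.

Theorem corollary3 (alpha a1 a2 : C) :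
  Cmod alpha = 1%R -> (Cmod a1 < 1)%R -> (Cmod a2 < 1)%R ->
  (Rbar_le (Msup (blaschke2 alpha a1 a2)) 3%R ->
     Rbar_le 1%R (minf (blaschke2 alpha a1 a2))) /\
  (Rbar_lt (Msup (blaschke2 alpha a1 a2)) 3%R ->
     Rbar_lt 1%R (minf (blaschke2 alpha a1 a2))).
Proof.
  intros Halpha Ha1 Ha2.
  pose proof (poisson2_pos a1 a2 Ha1 Ha2) as Hpos.
  split; intros HM.
  - apply minf_blaschke2_ge; auto; intros z Hz.
    pose proof (poisson2_lower_bound a1 a2 Ha1 Ha2 3
                  (Msup_blaschke2_le alpha a1 a2 Halpha Ha1 Ha2 3 HM) z Hz).
    lra.
  - assert (Hc : exists c : R, (c < 3)%R /\ Rbar_le (Msup (blaschke2 alpha a1 a2)) c).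
    { destruct (Msup (blaschke2 alpha a1 a2)) as [l | |]; simpl in HM |- *.
      - exists l; auto with real.
      - contradiction.
      - exists 0%R; split; [lra | exact I]. }
    destruct Hc as (c & Hc3 & Hc).
    pose proof (poisson2_lower_bound a1 a2 Ha1 Ha2 c
                  (Msup_blaschke2_le alpha a1 a2 Halpha Ha1 Ha2 c Hc)) as Hlow.
    assert (Hc1 : (1 < c)%R) by (pose proof (Hlow 1 Cmod_1); pose proof (Hpos 1 Cmod_1); nra).
    apply (Rbar_lt_le_trans _ (2 / (c - 1))%R).
    + simpl; apply Rmult_lt_reg_l with (c - 1)%R; [lra |].
      replace ((c - 1) * (2 / (c - 1)))%R with 2%R by (field; lra); lra.
    + apply minf_blaschke2_ge; auto; intros z Hz.
      pose proof (Hlow z Hz); apply Rmult_le_reg_l with (c - 1)%R; [lra |].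
      replace ((c - 1) * (2 / (c - 1)))%R with 2%R by (field; lra); lra.
Qed.
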